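(* Let $G=(L,R,E)$ be a bipartite graph, $f:2^E\to\mathbb{R}_{\ge0}$ non-negative, monotonically non-decreasing and submodular, $p\in(0,1)$, and let $M$ be the set produced by $\mathrm{SIMULATE2}$ (see context). Then $\mathbb{E}[f(M)]\ge\frac p3\cdot\mathrm{OPT}$, where $\mathrm{OPT}=\max\{f(T):T\subseteq E\text{ a matching}\}$.
   Context: $f_M(e)=f(M\cup\{e\})-f(M)$. $\mathrm{SIMULATE2}$: start with $M=N=\emptyset$ and a working copy of $E$. While there is an edge $e^*=(\ell^*,r^* )$ in the working edge set such that $M\cup\{e^*\}$ is a matching, take such an edge maximizing $f_M(e^* )$ (fixed tie-breaking); flip an independent coin with head probability $p$; on heads add $e^*$ to $M$, otherwise add $e^*$ to $N$; then remove all edges incident to $\ell^*$ from the working edge set. Finally let $S$ be the set of edges $(\ell,r)\in N$ that are the only edge of $N$ incident to $r$. *)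

From mathcomp Require Import all_boot all_order all_algebra.
From mathcomp Require Import reals.
Set Implicit Arguments. Unset Strict Implicit. Unset Printing Implicit Defensive.
Import Order.TTheory GRing.Theory Num.Theory.
Local Open Scope ring_scope.

Section Simulate2.
Variables (L Rv E : finType) (lft : E -> L) (rgt : E -> Rv).

Definition is_matching (M : {set E}) : bool :=
  [forall e in M, forall e' in M,
     (e != e') ==> ((lft e != lft e') && (rgt e != rgt e'))].

Variable R : realType.
Variable f : {set E} -> R.

Definition marg (M : {set E}) (e : E) : R := f (e |: M) - f M.

(* A fixed (deterministic) tie-breaking selector: given the current M and the
   nonempty set C of candidate edges, it returns an element of C maximizing f_M. *)
Definition greedy_selector (sel : {set E} -> {set E} -> E) : Prop :=
  forall M C : {set E}, C != set0 ->
    sel M C \in C /\ (forall e, e \in C -> marg M e <= marg M (sel M C)).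

Variables (sel : {set E} -> {set E} -> E) (p : R).

(* Expected value of f(M_final) for SIMULATE2 started in state (M, W),
   W the working edge set; the fuel n bounds the number of iterations
   (each iteration removes at least the chosen edge from W). The coin
   outcome only decides whether e* goes to M (prob. p) or to N (prob 1-p);
   N does not influence M's evolution, so it is not tracked. *)
Fixpoint sim2_exp (n : nat) (M W : {set E}) : R :=
  match n with
  | 0 => f M
  | n'.+1 =>
    let C := [set e in W | is_matching (e |: M)] in
    if C == set0 then f M else
    let e := sel M C in
    let W' := [set e' in W | lft e' != lft e] in
    p * sim2_exp n' (e |: M) W' + (1 - p) * sim2_exp n' M W'
  end.

Definition simulate2_expected_value : R :=
  sim2_exp #|E|.+1 set0 [set: E].

End Simulate2.

From mathcomp Require Import all_boot all_order all_algebra.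
From mathcomp Require Import reals.
From mathcomp Require Import lra.
Set Implicit Arguments. Unset Strict Implicit. Unset Printing Implicit Defensive.
Import Order.TTheory GRing.Theory Num.Theory.
Local Open Scope ring_scope.

(* The expected value dominates the potential
     (1 - p/3) f(M) + p/3 f(M ∪ A),
   where A is the part of an optimal matching T that can still be added to M.
   In one step the greedy edge e, of marginal gain g, conflicts with at most
   one edge of A at its left endpoint and one at its right endpoint; by
   submodularity dropping each costs at most g, while e itself is gained with
   probability p.  On tails only the edge sharing e's left endpoint is lost
   (W loses every edge at that endpoint), so the potential is preserved in
   expectation. *)

Section Matching.
Variables (L Rv E : finType) (lft : E -> L) (rgt : E -> Rv).

Lemma matchingP (S : {set E}) :
  reflect (forall a b, a \in S -> b \in S -> a != b ->
             (lft a != lft b) && (rgt a != rgt b))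
          (is_matching lft rgt S).
Proof.
apply: (iffP forall_inP) => H.
- by move=> a b aS bS; apply: (implyP (forall_inP (H a aS) b bS)).
- by move=> a aS; apply/forall_inP => b bS; apply/implyP; apply: H.
Qed.

Lemma matchingS (A S : {set E}) :
  A \subset S -> is_matching lft rgt S -> is_matching lft rgt A.
Proof.
move=> /subsetP AS /matchingP hS; apply/matchingP => a b aA bA.
exact: hS (AS a aA) (AS b bA).
Qed.

Lemma matching_set1 e : is_matching lft rgt [set e].
Proof. by apply/matchingP => a b /set1P-> /set1P->; rewrite eqxx. Qed.

Lemma matching_inj_lft S : is_matching lft rgt S -> {in S &, injective lft}.
Proof.
move=> /matchingP hS a b aS bS eab; apply/eqP; apply: contraT => /(hS a b aS bS).
by rewrite eab eqxx.
Qed.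

Lemma matching_inj_rgt S : is_matching lft rgt S -> {in S &, injective rgt}.
Proof.
move=> /matchingP hS a b aS bS eab; apply/eqP; apply: contraT => /(hS a b aS bS).
by rewrite eab eqxx andbF.
Qed.

Lemma matching_setU1_merge t e M :
  is_matching lft rgt (t |: M) -> is_matching lft rgt (e |: M) ->
  lft t != lft e -> rgt t != rgt e -> is_matching lft rgt (t |: (e |: M)).
Proof.
move=> /matchingP Ht /matchingP He hl hr.
apply/matchingP => a b; rewrite !inE.
move=> /or3P [/eqP->|/eqP->|aM] /or3P [/eqP->|/eqP->|bM] ab.
- by rewrite eqxx in ab.
- by rewrite hl hr.
- by apply: Ht => //; rewrite !inE ?eqxx ?bM ?orbT.
- by rewrite (eq_sym (lft e)) (eq_sym (rgt e)) hl hr.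
- by rewrite eqxx in ab.
- by apply: He => //; rewrite !inE ?eqxx ?bM ?orbT.
- by apply: Ht => //; rewrite !inE ?eqxx ?aM ?orbT.
- by apply: He => //; rewrite !inE ?eqxx ?aM ?orbT.
- by apply: Ht => //; rewrite !inE ?aM ?bM ?orbT.
Qed.

End Matching.

Section Submodular.
Variables (E : finType) (R : realType) (f : {set E} -> R).
Hypotheses (f_mono : forall A B : {set E}, A \subset B -> f A <= f B)
  (f_submod : forall A B : {set E}, f (A :|: B) + f (A :&: B) <= f A + f B).

Lemma le_setU1_marg M B t : f (M :|: (t |: B)) <= f (M :|: B) + marg f M t.
Proof.
have := f_submod (t |: M) (M :|: B).
have -> : (t |: M) :|: (M :|: B) = M :|: (t |: B).
  by apply/setP => x; rewrite !inE; case: (x == t); case: (x \in M).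
have : f M <= f ((t |: M) :&: (M :|: B)).
  by apply: f_mono; rewrite subsetI subsetUr subsetUl.
rewrite /marg; lra.
Qed.

Lemma le_setU_drop_key (K : eqType) (k : E -> K) (c : K) (M A : {set E}) g :
  {in A &, injective k} -> (forall t, t \in A -> marg f M t <= g) -> 0 <= g ->
  f (M :|: A) <= f (M :|: [set t in A | k t != c]) + g.
Proof.
move=> k_inj hg g0.
case: (pickP [pred t in A | k t == c]) => [t /andP [tA /eqP kt] | none].
- have sub : A \subset t |: [set u in A | k u != c].
    apply/subsetP => u uA; rewrite !inE uA /=.
    have [kuc|] := eqVneq (k u) c; last by rewrite orbT.
    by rewrite (k_inj u t uA tA) ?kt // eqxx.
  apply: (le_trans (f_mono (setUS M sub))).
  apply: (le_trans (le_setU1_marg _ _ _)).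
  by rewrite lerD2l hg.
- have -> : [set t in A | k t != c] = A.
    by apply/setP => u; rewrite inE; move: (none u) => /=; case: (u \in A) => //= ->.
  by rewrite lerDl.
Qed.

End Submodular.

Lemma potential_step (R : realFieldType) (p x y z u w a b : R) :
  0 < p < 1 -> x <= y -> z <= u + (y - x) -> u <= w + (y - x) ->
  (1 - p/3) * x + p/3 * u <= a -> (1 - p/3) * y + p/3 * w <= b ->
  (1 - p/3) * x + p/3 * z <= p * b + (1 - p) * a.
Proof.
move=> /andP[p0 p1] xy zu uw ha hb.
have : 0 <= p * (b - ((1 - p/3) * y + p/3 * w)) by apply: mulr_ge0; lra.
have : 0 <= (1 - p) * (a - ((1 - p/3) * x + p/3 * u)) by apply: mulr_ge0; lra.
have : 0 <= p * (1 - p) * (y - x) by rewrite !mulr_ge0 //; lra.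
have : 0 <= p * (w + (y - x) - u) by apply: mulr_ge0; lra.
nra.
Qed.

Section Simulate2.
Variables (L Rv E : finType) (lft : E -> L) (rgt : E -> Rv)
  (R : realType) (f : {set E} -> R)
  (sel : {set E} -> {set E} -> E) (p : R).
Hypotheses (f_mono : forall A B : {set E}, A \subset B -> f A <= f B)
  (f_submod : forall A B : {set E}, f (A :|: B) + f (A :&: B) <= f A + f B)
  (p_range : 0 < p < 1) (sel_greedy : greedy_selector f sel).
Variable T : {set E}.
Hypothesis T_matching : is_matching lft rgt T.

Lemma sim2_exp_ge_potential n (M W A : {set E}) :
  (#|W| < n)%N -> A \subset T ->
  (forall t, t \in A -> (t \in W) && is_matching lft rgt (t |: M)) ->
  (1 - p/3) * f M + p/3 * f (M :|: A) <= sim2_exp lft rgt f sel p n M W.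
Proof.
elim: n M W A => [|n IH] M W A; first by rewrite ltn0.
move=> hW AT hA /=.
set C := [set e in W | is_matching lft rgt (e |: M)].
have AC : A \subset C by apply/subsetP => t tA; rewrite inE hA.
case: ifP => [/eqP C0 | /negbT C0].
  have -> : A = set0 by apply/eqP; rewrite -subset0 -C0.
  by rewrite setU0 -mulrDl subrK mul1r.
have [eC e_max] := sel_greedy M C0; set e := sel M C in eC e_max *.
set W' := [set e' in W | lft e' != lft e].
set A0 := [set t in A | lft t != lft e].
set A1 := [set t in A0 | rgt t != rgt e].
have A0A : A0 \subset A by apply/subsetP => x; rewrite inE => /andP [].
have A1A0 : A1 \subset A0 by apply/subsetP => x; rewrite inE => /andP [].
have hW' : (#|W'| < n)%N.
  have : W' \proper W.
    apply/properP; split; first by apply/subsetP => x; rewrite inE => /andP [].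
    by exists e; [case/setIdP: eC | rewrite inE eqxx andbF].
  by move/proper_card => /leq_trans; apply.
have g_ge0 : 0 <= marg f M e by rewrite subr_ge0 f_mono ?subsetUr.
have marg_le t : t \in A -> marg f M t <= marg f M e.
  by move=> tA; apply: e_max; apply: (subsetP AC).
have drop_lft : f (M :|: A) <= f (M :|: A0) + marg f M e.
  apply: (le_setU_drop_key f_mono f_submod) marg_le g_ge0.
  exact: matching_inj_lft (matchingS AT T_matching).
have drop_rgt : f (M :|: A0) <= f ((e |: M) :|: A1) + marg f M e.
  apply: (le_trans (le_setU_drop_key f_mono f_submod _ _ _ g_ge0)).
  - exact: matching_inj_rgt (matchingS (subset_trans A0A AT) T_matching).
  - by move=> t /(subsetP A0A); apply: marg_le.
  - by rewrite lerD2r; apply/f_mono/setSU/subsetUr.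
have tails : (1 - p/3) * f M + p/3 * f (M :|: A0) <= sim2_exp lft rgt f sel p n M W'.
  apply: IH (subset_trans A0A AT) _ => // t; rewrite inE => /andP [tA ne].
  by have /andP [tW tM] := hA t tA; rewrite inE tW ne.
have heads : (1 - p/3) * f (e |: M) + p/3 * f ((e |: M) :|: A1)
    <= sim2_exp lft rgt f sel p n (e |: M) W'.
  apply: IH (subset_trans A1A0 (subset_trans A0A AT)) _ => // t.
  rewrite !inE => /andP [/andP [tA nl] nr].
  have /andP [tW tM] := hA t tA; rewrite tW nl /=.
  by apply: matching_setU1_merge => //; case/setIdP: eC.
have le_M_eM : f M <= f (e |: M) by rewrite -subr_ge0.
exact: potential_step p_range le_M_eM drop_lft drop_rgt tails heads.
Qed.

End Simulate2.

Theorem lemma10 (L Rv E : finType) (lft : E -> L) (rgt : E -> Rv)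
  (R : realType) (f : {set E} -> R)
  (sel : {set E} -> {set E} -> E) (p : R) :
  injective (fun e => (lft e, rgt e)) ->
  (forall A : {set E}, 0 <= f A) ->
  (forall A B : {set E}, A \subset B -> f A <= f B) ->
  (forall A B : {set E}, f (A :|: B) + f (A :&: B) <= f A + f B) ->
  0 < p < 1 ->
  greedy_selector f sel ->
  forall T : {set E}, is_matching lft rgt T ->
    p / 3 * f T <= simulate2_expected_value lft rgt f sel p.
Proof.
move=> _ f_ge0 f_mono f_submod p_range sel_greedy T T_matching.
have := sim2_exp_ge_potential f_mono f_submod p_range sel_greedy T_matching
  (n := #|E|.+1) (M := set0) (W := [set: E]) (A := T).
rewrite cardsT set0U => /(_ (ltnSn _) (subxx T)) potential.
apply: (le_trans _ (potential _)).
  by have := f_ge0 set0; case/andP: p_range => p0 p1; nra.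
by move=> t _; rewrite inE setU0 matching_set1.
Qed.
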